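(* Let $z>0$ and $\mu\in\left(-\frac{5}{2},-\frac{1}{2}\right)$ with $\mu\neq-\frac{3}{2}$. Then $$\left[s_{\mu,\frac{1}{2}}(z)\right]^2-s_{\mu-1,\frac{1}{2}}(z)\,s_{\mu+1,\frac{1}{2}}(z)>\frac{1}{\frac{1}{2}-\mu}\left[s_{\mu,\frac{1}{2}}(z)\right]^2,$$ where $s_{\mu,\nu}$ denotes the Lommel function of the first kind.
   Context: The Lommel function of the first kind $s_{\mu,\nu}$ is the particular solution of the inhomogeneous Bessel equation $z^2y''+zy'+(z^2-\nu^2)y=z^{\mu+1}$ given by $$s_{\mu,\nu}(z)=\frac{z^{\mu+1}}{(\mu-\nu+1)(\mu+\nu+1)}\,{}_{1}F_{2}\left(1;\frac{\mu-\nu+3}{2},\frac{\mu+\nu+3}{2};-\frac{z^2}{4}\right),$$ where ${}_1F_2(a;b_1,b_2;x)=\sum_{n\ge0}\frac{(a)_n}{(b_1)_n(b_2)_n}\frac{x^n}{n!}$ and $(a)_n$ is the Pochhammer symbol; it is undefined when either of $\mu\pm\nu$ is an odd negative integer. For $z>0$, $z^{\mu+1}$ denotes the positive real power. *)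

From Stdlib Require Import Reals.
From Coquelicot Require Import Coquelicot.
Open Scope R_scope.

Fixpoint poch (a : R) (n : nat) : R :=
  match n with
  | O => 1
  | S m => poch a m * (a + INR m)
  end.

Definition hyp1F2 (a b1 b2 x : R) : R :=
  Series (fun n => poch a n / (poch b1 n * poch b2 n) * x ^ n / INR (Factorial.fact n)).

(* Lommel function of the first kind, for z > 0 (z^(mu+1) = Rpower). *)
Definition lommel_s (mu nu z : R) : R :=
  Rpower z (mu + 1) / ((mu - nu + 1) * (mu + nu + 1))
  * hyp1F2 1 ((mu - nu + 3) / 2) ((mu + nu + 3) / 2) (- (z ^ 2) / 4).

From Stdlib Require Import Reals Lra Lia.
From Coquelicot Require Import Coquelicot.
Open Scope R_scope.

(* For nu = 1/2 the duplication formula collapses the 1F2 series: with c = mu + 5/2 and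
   w = z^2, s_{mu,1/2}(z) = z^(mu+1) A_c(w) / ((mu+1/2)(mu+3/2)), where
   A_c(w) = sum_n (-w)^n / (c)_(2n).  With B_c(w) = sum_n (-w)^n / (c)_(2n+1), the contiguous
   relations A_(c+1) = c B_c and A_(c-1) = 1 - w B_c / (c-1) turn the Turan-type difference
   into a positive multiple of A^2 + w B^2 + (1-c) B, which is half of A^2 + w B^2 plus
   R = A^2 + w B^2 + 2(1-c) B.  For 0 < c < 2, R stays positive: the system
   2wA' = (1-c)(A-1) - wB, 2wB' = A - cB gives (w^(c/2) R)' = (1-c/2) w^(c/2-1) (A^2 + w B^2) >= 0,
   while R(0) = (2-c)/c > 0. *)

Lemma lim_seq_inv_quadratic (c d : R) :
  is_lim_seq (fun n => / Rabs ((c + 2 * INR n) * (d + 2 * INR n))) 0.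
Proof.
  assert (Hlin : forall e, is_lim_seq (fun n => e + 2 * INR n) p_infty).
  { intros e; apply is_lim_seq_ext with (fun n => e + INR n + INR n); [intros; ring|].
    apply is_lim_seq_plus with p_infty p_infty; [|apply is_lim_seq_INR|reflexivity].
    apply is_lim_seq_plus with e p_infty;
      [apply is_lim_seq_const|apply is_lim_seq_INR|reflexivity]. }
  replace (Finite 0) with (Rbar_inv p_infty) by reflexivity.
  apply is_lim_seq_inv; [|discriminate].
  replace p_infty with (Rbar_abs p_infty) by reflexivity.
  apply is_lim_seq_abs, is_lim_seq_mult with p_infty p_infty; auto; reflexivity.
Qed.

Lemma ex_pseries_of_CV_radius (a : nat -> R) (w : R) :
  CV_radius a = p_infty -> ex_pseries a w.
Proof. intros Ha; apply CV_radius_inside; rewrite Ha; exact I. Qed.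

Lemma PS_scal_R (c : R) (a : nat -> R) (n : nat) : PS_scal c a n = c * a n.
Proof. reflexivity. Qed.

Lemma PSeries_euler (a : nat -> R) (w : R) :
  w * PSeries (PS_derive a) w = PSeries (fun n => INR n * a n) w.
Proof.
  rewrite <- PSeries_incr_1; apply PSeries_ext.
  intros [|n]; [symmetry; apply Rmult_0_l | reflexivity].
Qed.

Lemma nondecreasing_of_derive_nonneg (f df : R -> R) (x y : R) :
  x <= y -> (forall t, x <= t <= y -> derivable_pt_lim f t (df t)) ->
  (forall t, x <= t <= y -> 0 <= df t) -> f x <= f y.
Proof.
  intros Hxy Hd Hpos; destruct (Rle_lt_or_eq_dec x y Hxy) as [Hlt | ->]; [|lra].
  destruct (MVT_cor2 f df x y Hlt Hd) as [t [Ht Htxy]].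
  pose proof (Hpos t ltac:(lra)); nra.
Qed.

Lemma continuity_pt_pos_right (f : R -> R) (x y : R) :
  continuity_pt f x -> 0 < f x -> x < y -> exists t, x < t < y /\ 0 < f t.
Proof.
  intros Hf Hfx Hxy.
  destruct (Hf (f x / 2)) as [d [Hd Hnear]]; [lra|].
  set (t := x + Rmin d (y - x) / 2).
  assert (Hm : 0 < Rmin d (y - x) <= d /\ Rmin d (y - x) <= y - x)
    by (split; [split; [apply Rmin_glb_lt|apply Rmin_l]|apply Rmin_r]; lra).
  exists t; split; [unfold t; lra|].
  assert (Hft : Rabs (f t - f x) < f x / 2).
  { apply Hnear; split; [split; [exact I|unfold t; lra]|].
    simpl; unfold R_dist, t; rewrite Rabs_right; lra. }
  apply Rabs_def2 in Hft; lra.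
Qed.

Lemma poch_succ_l (a : R) (n : nat) : poch a (S n) = a * poch (a + 1) n.
Proof.
  induction n as [|n IH]; [simpl; ring|].
  change (poch a (S (S n))) with (poch a (S n) * (a + INR (S n))).
  rewrite IH, S_INR; simpl poch; ring.
Qed.

Lemma poch_pos (a : R) (n : nat) : 0 < a -> 0 < poch a n.
Proof.
  intros Ha; induction n as [|n IH]; simpl; [lra|].
  pose proof (pos_INR n); apply Rmult_lt_0_compat; lra.
Qed.

Lemma poch_neq0 (a : R) (n : nat) : -1 < a -> a <> 0 -> poch a n <> 0.
Proof.
  intros Ha1 Ha0; induction n as [|n IH]; simpl; [lra|].
  apply Rmult_integral_contrapositive_currified; [exact IH|].
  destruct n as [|n]; [simpl; lra|].
  rewrite S_INR; pose proof (pos_INR n); lra.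
Qed.

Lemma poch_shift_neq0 (a : R) :
  (forall n, poch a n <> 0) -> a <> 0 /\ forall n, poch (a + 1) n <> 0.
Proof.
  intros Ha; split.
  - intros Z; apply (Ha 1%nat); simpl; rewrite Z; simpl; ring.
  - intros n Z; apply (Ha (S n)); rewrite poch_succ_l, Z; ring.
Qed.

Lemma poch_double_succ (a : R) (n : nat) :
  poch a (2 * S n) = poch a (2 * n) * (a + 2 * INR n) * (a + 2 * INR n + 1).
Proof.
  replace (2 * S n)%nat with (S (S (2 * n))) by lia.
  change (poch a (S (S (2 * n)))) with
    (poch a (2 * n) * (a + INR (2 * n)) * (a + INR (S (2 * n)))).
  rewrite S_INR, mult_INR; simpl (INR 2); ring.
Qed.

Lemma poch_double_succ_r (a : R) (n : nat) :
  poch a (2 * n + 1) = poch a (2 * n) * (a + 2 * INR n).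
Proof.
  replace (2 * n + 1)%nat with (S (2 * n)) by lia.
  change (poch a (S (2 * n))) with (poch a (2 * n) * (a + INR (2 * n))).
  rewrite mult_INR; simpl (INR 2); ring.
Qed.

Lemma poch_duplication (a : R) (n : nat) :
  poch (a / 2) n * poch ((a + 1) / 2) n * 4 ^ n = poch a (2 * n).
Proof.
  induction n as [|n IH]; [simpl; ring|].
  rewrite poch_double_succ, <- IH; simpl poch; simpl pow; field.
Qed.

Lemma poch_1 (n : nat) : poch 1 n = INR (Factorial.fact n).
Proof.
  induction n as [|n IH]; [reflexivity|].
  simpl poch; rewrite IH, Rfunctions.fact_simpl, mult_INR, S_INR; ring.
Qed.

Definition coefA (c : R) (n : nat) : R := (-1) ^ n / poch c (2 * n).
Definition coefB (c : R) (n : nat) : R := (-1) ^ n / poch c (2 * n + 1).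

Local Notation serA c := (PSeries (coefA c)).
Local Notation serB c := (PSeries (coefB c)).

Lemma hyp1F2_half (c w : R) :
  hyp1F2 1 (c / 2) ((c + 1) / 2) (- w / 4) = serA c w.
Proof.
  unfold hyp1F2, PSeries; apply Series_ext; intros n.
  change (@scal R_AbsRing R_NormedModule) with Rmult; unfold coefA.
  rewrite poch_1, <- poch_duplication.
  replace (- w / 4) with ((-1) * w * / 4) by field.
  rewrite !Rpow_mult_distr, pow_inv; unfold Rdiv; rewrite !Rinv_mult.
  (* The Pochhammer factors occur only inverted, so no nonvanishing hypothesis is needed. *)
  generalize (/ poch (c * / 2) n) (/ poch ((c + 1) * / 2) n); intros ip iq.
  pose proof (INR_fact_neq_0 n).
  assert (4 ^ n <> 0) by (apply pow_nonzero; lra).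
  field; tauto.
Qed.

Lemma lommel_s_half (m z : R) :
  lommel_s m (1/2) z = Rpower z (m + 1) / ((m + 1/2) * (m + 3/2)) * serA (m + 5/2) (z ^ 2).
Proof.
  unfold lommel_s; rewrite <- hyp1F2_half.
  replace ((m - 1/2 + 3) / 2) with ((m + 5/2) / 2) by field.
  replace ((m + 1/2 + 3) / 2) with ((m + 5/2 + 1) / 2) by field.
  replace (m - 1/2 + 1) with (m + 1/2) by field.
  replace (m + 1/2 + 1) with (m + 3/2) by field.
  reflexivity.
Qed.

Lemma coefA_neq0 (c : R) (n : nat) : poch c (2 * n) <> 0 -> coefA c n <> 0.
Proof.
  intros Hp; unfold coefA, Rdiv.
  apply Rmult_integral_contrapositive_currified;
    [apply pow_nonzero; lra | apply Rinv_neq_0_compat, Hp].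
Qed.

Lemma CV_radius_coefA (c : R) :
  (forall n, poch c n <> 0) -> CV_radius (coefA c) = p_infty.
Proof.
  intros Hc; apply CV_radius_infinite_DAlembert.
  { intros n; apply coefA_neq0, Hc. }
  apply is_lim_seq_ext with (fun n => / Rabs ((c + 2 * INR n) * (c + 1 + 2 * INR n)));
    [|apply lim_seq_inv_quadratic].
  intros n; rewrite <- Rabs_inv, <- Rabs_Ropp; f_equal.
  pose proof (Hc (2 * S n)%nat) as Hn; rewrite poch_double_succ in Hn.
  apply Rmult_neq_0_reg in Hn as [[Hp H1]%Rmult_neq_0_reg H2].
  pose proof (pow_nonzero (-1) n ltac:(lra)).
  unfold coefA; rewrite poch_double_succ; simpl pow.
  field; repeat split; auto; lra.
Qed.

Lemma coefB_eq (c : R) (n : nat) : coefB c n = coefA (c + 1) n / c.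
Proof.
  unfold coefA, coefB; replace (2 * n + 1)%nat with (S (2 * n)) by lia.
  rewrite poch_succ_l; unfold Rdiv; rewrite Rinv_mult; ring.
Qed.

Lemma coefA_succ (c : R) (n : nat) : coefA c (S n) = - coefB (c + 1) n / c.
Proof.
  unfold coefA, coefB; replace (2 * S n)%nat with (S (2 * n + 1)) by lia.
  rewrite poch_succ_l; unfold Rdiv; rewrite Rinv_mult; simpl pow; ring.
Qed.

Lemma CV_radius_coefB (c : R) :
  (forall n, poch c n <> 0) -> CV_radius (coefB c) = p_infty.
Proof.
  intros Hc; destruct (poch_shift_neq0 c Hc) as [Hc0 Hc1].
  rewrite (CV_radius_ext _ (PS_scal (/ c) (coefA (c + 1)))).
  - rewrite CV_radius_scal by (apply Rinv_neq_0_compat, Hc0).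
    apply CV_radius_coefA, Hc1.
  - intros n; rewrite PS_scal_R, coefB_eq; unfold Rdiv; ring.
Qed.

Lemma serA_succ (c w : R) :
  (forall n, poch c n <> 0) -> serA (c + 1) w = c * serB c w.
Proof.
  intros Hc; destruct (poch_shift_neq0 c Hc) as [Hc0 _].
  rewrite <- PSeries_scal; apply PSeries_ext; intros n.
  rewrite PS_scal_R, coefB_eq; field; exact Hc0.
Qed.

Lemma serA_eq_serB_succ (c w : R) :
  (forall n, poch c n <> 0) -> serA c w = 1 - w * serB (c + 1) w / c.
Proof.
  intros Hc; destruct (poch_shift_neq0 c Hc) as [Hc0 _].
  rewrite PSeries_decr_1 by (apply ex_pseries_of_CV_radius, CV_radius_coefA, Hc).
  replace (coefA c 0) with 1 by (unfold coefA; simpl; field).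
  rewrite (PSeries_ext _ (PS_scal (- / c) (coefB (c + 1)))), PSeries_scal.
  - field; exact Hc0.
  - intros n; rewrite PS_scal_R; unfold PS_decr_1; rewrite coefA_succ; field; exact Hc0.
Qed.

Lemma coefA_eq_coefB (c : R) (n : nat) :
  poch c (2 * n + 1) <> 0 -> coefA c n = (c + 2 * INR n) * coefB c n.
Proof.
  intros Hp; rewrite poch_double_succ_r in Hp.
  apply Rmult_neq_0_reg in Hp as [Hp Hl].
  unfold coefA, coefB; rewrite poch_double_succ_r; field; auto.
Qed.

Lemma coefB_eq_coefA_succ (c : R) (n : nat) :
  poch c (2 * S n) <> 0 -> coefB c n = - (c + 2 * INR n + 1) * coefA c (S n).
Proof.
  intros Hp; rewrite poch_double_succ in Hp.
  apply Rmult_neq_0_reg in Hp as [[Hp Hl]%Rmult_neq_0_reg Hl'].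
  unfold coefA, coefB; rewrite poch_double_succ, poch_double_succ_r; simpl pow.
  field; auto.
Qed.

Section Series_ode.

Variable c : R.
Hypothesis Hc : forall n, poch c n <> 0.

Let ex_serA w : ex_pseries (coefA c) w.
Proof. apply ex_pseries_of_CV_radius, CV_radius_coefA, Hc. Qed.

Let ex_serB w : ex_pseries (coefB c) w.
Proof. apply ex_pseries_of_CV_radius, CV_radius_coefB, Hc. Qed.

Lemma serA_ode (w : R) :
  2 * w * PSeries (PS_derive (coefA c)) w = (1 - c) * (serA c w - 1) - w * serB c w.
Proof.
  rewrite (PSeries_decr_1 (coefA c)) by apply ex_serA.
  replace (coefA c 0) with 1 by (unfold coefA; simpl; field).
  rewrite (PSeries_ext _ (PS_scal (/ 2)
             (PS_minus (PS_scal (1 - c) (PS_decr_1 (coefA c))) (coefB c)))).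
  - rewrite PSeries_scal, PSeries_minus, PSeries_scal; [field| |].
    + apply ex_pseries_scal; [apply Rmult_comm|].
      apply ex_pseries_of_CV_radius; rewrite CV_radius_decr_1; apply CV_radius_coefA, Hc.
    + apply ex_serB.
  - intros n; rewrite PS_scal_R; unfold PS_minus, PS_plus, PS_opp, PS_derive, PS_decr_1.
    rewrite PS_scal_R, (coefB_eq_coefA_succ c n (Hc _)), S_INR.
    change (plus ?x ?y) with (x + y); change (opp ?x) with (- x); field.
Qed.

Lemma serB_ode (w : R) :
  2 * w * PSeries (PS_derive (coefB c)) w = serA c w - c * serB c w.
Proof.
  rewrite Rmult_assoc, PSeries_euler, <- (PSeries_scal c (coefB c)), <- PSeries_minus;
    [| apply ex_serA | apply ex_pseries_scal; [apply Rmult_comm | apply ex_serB]].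
  rewrite <- PSeries_scal; apply PSeries_ext; intros n.
  unfold PS_minus, PS_plus, PS_opp; rewrite !PS_scal_R, (coefA_eq_coefB c n (Hc _)).
  change (plus ?x ?y) with (x + y); change (opp ?x) with (- x); ring.
Qed.

End Series_ode.

Definition turan_form (c w : R) : R :=
  serA c w * serA c w + w * (serB c w * serB c w) + 2 * (1 - c) * serB c w.

Definition turan_form_derive (c w : R) : R :=
  let dA := PSeries (PS_derive (coefA c)) w in
  let dB := PSeries (PS_derive (coefB c)) w in
  2 * serA c w * dA + serB c w * serB c w + 2 * w * serB c w * dB + 2 * (1 - c) * dB.

Lemma turan_form_is_derive (c w : R) :
  (forall n, poch c n <> 0) -> is_derive (turan_form c) w (turan_form_derive c w).
Proof.
  intros Hc.
  assert (RA : Rbar_lt (Rabs w) (CV_radius (coefA c)))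
    by (rewrite CV_radius_coefA; [exact I|exact Hc]).
  assert (RB : Rbar_lt (Rabs w) (CV_radius (coefB c)))
    by (rewrite CV_radius_coefB; [exact I|exact Hc]).
  unfold turan_form; auto_derive.
  - repeat split; eexists; apply is_derive_PSeries; assumption.
  - rewrite !Derive_PSeries by assumption; unfold turan_form_derive; ring.
Qed.

Lemma turan_form_euler (c w : R) :
  (forall n, poch c n <> 0) ->
  c / 2 * turan_form c w + w * turan_form_derive c w
  = (1 - c / 2) * (serA c w * serA c w + w * (serB c w * serB c w)).
Proof.
  intros Hc; unfold turan_form, turan_form_derive; cbv zeta.
  transitivity (c / 2 * turan_form c w
    + serA c w * (2 * w * PSeries (PS_derive (coefA c)) w) + w * (serB c w * serB c w)
    + (w * serB c w + (1 - c)) * (2 * w * PSeries (PS_derive (coefB c)) w));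
    [unfold turan_form; ring|].
  rewrite serA_ode, serB_ode by exact Hc; unfold turan_form; field.
Qed.

Lemma turan_form_at_0 (c : R) : c <> 0 -> turan_form c 0 = (2 - c) / c.
Proof.
  intros Hc; unfold turan_form; rewrite !PSeries_0; unfold coefA, coefB; simpl.
  field; exact Hc.
Qed.

Section Turan_form_positive.

Variable c : R.
Hypothesis Hc : 0 < c < 2.

Let Hpoch : forall n, poch c n <> 0.
Proof. intros n; apply Rgt_not_eq, poch_pos; lra. Qed.

Definition turan_weighted (w : R) : R := Rpower w (c / 2) * turan_form c w.

Definition turan_weighted_derive (w : R) : R :=
  Rpower w (c / 2 - 1) * (1 - c / 2) * (serA c w * serA c w + w * (serB c w * serB c w)).

Lemma turan_weighted_derivable (w : R) :
  0 < w -> derivable_pt_lim turan_weighted w (turan_weighted_derive w).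
Proof.
  intros Hw; unfold turan_weighted_derive.
  assert (Hpow : Rpower w (c / 2) = Rpower w (c / 2 - 1) * w).
  { rewrite <- (Rpower_1 w) at 3 by exact Hw; rewrite <- Rpower_plus; f_equal; ring. }
  rewrite Rmult_assoc, <- turan_form_euler by exact Hpoch.
  replace (Rpower w (c / 2 - 1) * (c / 2 * turan_form c w + w * turan_form_derive c w))
    with (c / 2 * Rpower w (c / 2 - 1) * turan_form c w + Rpower w (c / 2) * turan_form_derive c w)
    by (rewrite Hpow; ring).
  apply (derivable_pt_lim_mult (fun w => Rpower w (c / 2)) (turan_form c)).
  - apply derivable_pt_lim_power, Hw.
  - apply is_derive_Reals, turan_form_is_derive, Hpoch.
Qed.

Lemma turan_form_pos (w : R) : 0 < w -> 0 < turan_form c w.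
Proof.
  intros Hw.
  assert (Hcont : continuity_pt (turan_form c) 0).
  { apply derivable_continuous_pt; exists (turan_form_derive c 0).
    apply is_derive_Reals, turan_form_is_derive, Hpoch. }
  assert (H0 : 0 < turan_form c 0)
    by (rewrite turan_form_at_0 by lra; apply Rdiv_lt_0_compat; lra).
  destruct (continuity_pt_pos_right _ _ _ Hcont H0 Hw) as [w0 [Hw0 Hpos0]].
  assert (Hmono : turan_weighted w0 <= turan_weighted w).
  { apply (nondecreasing_of_derive_nonneg _ turan_weighted_derive w0 w); [lra| |].
    - intros t Ht; apply turan_weighted_derivable; lra.
    - intros t Ht; unfold turan_weighted_derive.
      assert (0 < Rpower t (c / 2 - 1)) by apply exp_pos.
      apply Rmult_le_pos; [apply Rmult_le_pos; lra|].
      apply Rplus_le_le_0_compat; [apply Rle_0_sqr|].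
      apply Rmult_le_pos; [lra|apply Rle_0_sqr]. }
  unfold turan_weighted in Hmono.
  assert (0 < Rpower w0 (c / 2)) by apply exp_pos.
  assert (0 < Rpower w (c / 2)) by apply exp_pos.
  nra.
Qed.

End Turan_form_positive.

Definition turan_gap (c w : R) : R :=
  serA c w * serA c w + w * (serB c w * serB c w) + (1 - c) * serB c w.

Lemma turan_gap_pos (c w : R) : 0 < c < 2 -> 0 < w -> 0 < turan_gap c w.
Proof.
  intros Hc Hw; pose proof (turan_form_pos c Hc w Hw) as HT.
  unfold turan_form in HT; unfold turan_gap.
  pose proof (Rle_0_sqr (serA c w)); pose proof (Rle_0_sqr (serB c w)); unfold Rsqr in *.
  assert (0 <= w * (serB c w * serB c w)) by (apply Rmult_le_pos; lra).
  lra.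
Qed.

Lemma Rpower_succ_sq (z x : R) : Rpower z (x + 1) = Rpower z x ^ 2 / Rpower z (x - 1).
Proof.
  assert (0 < Rpower z (x - 1)) by apply exp_pos.
  replace (Rpower z x ^ 2) with (Rpower z (x - 1) * Rpower z (x + 1)).
  - field; lra.
  - rewrite <- Rpower_plus; simpl pow; rewrite Rmult_1_r, <- Rpower_plus; f_equal; ring.
Qed.

Lemma lommel_turan_difference (z mu : R) :
  -5/2 < mu < -1/2 -> mu <> -3/2 ->
  (lommel_s mu (1/2) z) ^ 2 - lommel_s (mu - 1) (1/2) z * lommel_s (mu + 1) (1/2) z
  - 1 / (1/2 - mu) * (lommel_s mu (1/2) z) ^ 2
  = Rpower z (mu + 1) ^ 2 * turan_gap (mu + 5/2) (z ^ 2)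
    / ((1/2 - mu) * (- 1/2 - mu) * (mu + 3/2) ^ 2).
Proof.
  intros Hmu Hmu3.
  assert (Hc : forall n, poch (mu + 5/2) n <> 0)
    by (intros; apply Rgt_not_eq, poch_pos; lra).
  assert (Hc' : forall n, poch (mu + 3/2) n <> 0) by (intros; apply poch_neq0; lra).
  rewrite !lommel_s_half.
  replace (mu - 1 + 5/2) with (mu + 3/2) by field.
  replace (mu + 1 + 5/2) with (mu + 5/2 + 1) by field.
  rewrite (serA_eq_serB_succ (mu + 3/2)), serA_succ by assumption.
  replace (mu + 3/2 + 1) with (mu + 5/2) by field.
  rewrite (Rpower_succ_sq z (mu + 1)).
  replace (mu + 1 - 1) with (mu - 1 + 1) by ring.
  assert (0 < Rpower z (mu - 1 + 1)) by apply exp_pos.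
  unfold turan_gap; field; repeat split; lra.
Qed.

Theorem theorem1 (z mu : R) :
  0 < z -> -5/2 < mu < -1/2 -> mu <> -3/2 ->
  (lommel_s mu (1/2) z) ^ 2 - lommel_s (mu - 1) (1/2) z * lommel_s (mu + 1) (1/2) z
  > 1 / (1/2 - mu) * (lommel_s mu (1/2) z) ^ 2.
Proof.
  intros Hz Hmu Hmu3.
  apply Rminus_gt; rewrite lommel_turan_difference by assumption.
  apply Rdiv_lt_0_compat.
  - apply Rmult_lt_0_compat; [apply pow_lt, exp_pos|].
    apply turan_gap_pos; [lra | apply pow_lt, Hz].
  - apply Rmult_lt_0_compat; [nra|].
    rewrite <- Rsqr_pow2; apply Rsqr_pos_lt; lra.
Qed.
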